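(* Let $V\neq\emptyset$, let $F\colon V\leadsto V$ be a strict undirected multifunction and let $U,W\subset V$ be nonempty. Then $F$ is $(U,W)$-bipartite if and only if $V$ is the disjoint union of $U$ and $W$ and for every $n\in\mathbb{N}=\{0,1,2,\dots\}$ we have $F^{2n}_{-}(U)=U$, $F^{2n}_{-}(W)=W$, $F^{2n+1}_{-}(U)=W$ and $F^{2n+1}_{-}(W)=U$.
   Context: A multifunction $F\colon V\leadsto V$ is a map $F\colon V\to P(V)$; it is strict if $F(v)\neq\emptyset$ for all $v$, and undirected if $u\in F(v)\iff v\in F(u)$ for all $u,v$. For $A\subset V$, $F_{-}(A)=\{x\in V\mid F(x)\cap A\neq\emptyset\}$, and the iterates are $F^{0}_{-}(A)=A$, $F^{n}_{-}(A)=F_{-}(F^{n-1}_{-}(A))$ for $n\ge1$. A set $U\subset V$ is independent if $U\cap F_{-}(U)=\emptyset$. For nonempty $U,W\subset V$, $F$ is $(U,W)$-bipartite if $U,W$ are independent and $V$ is the disjoint union of $U$ and $W$. *)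

From Stdlib Require Import Arith.

Definition multifun (V : Type) := V -> (V -> Prop).

Definition set_eq {V : Type} (A B : V -> Prop) : Prop := forall x, A x <-> B x.

Definition nonempty {V : Type} (A : V -> Prop) : Prop := exists x, A x.

Definition strict {V : Type} (F : multifun V) : Prop :=
  forall v, nonempty (F v).

Definition undirected {V : Type} (F : multifun V) : Prop :=
  forall u v, F v u <-> F u v.

Definition Fminus {V : Type} (F : multifun V) (A : V -> Prop) : V -> Prop :=
  fun x => exists y, F x y /\ A y.

Fixpoint Fminus_iter {V : Type} (F : multifun V) (n : nat) (A : V -> Prop)
  : V -> Prop :=
  match n with
  | O => A
  | S m => Fminus F (Fminus_iter F m A)
  end.

Definition independent {V : Type} (F : multifun V) (U : V -> Prop) : Prop :=
  forall x, ~ (U x /\ Fminus F U x).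

Definition disjoint_union {V : Type} (U W : V -> Prop) : Prop :=
  (forall x, U x \/ W x) /\ (forall x, ~ (U x /\ W x)).

Definition bipartite {V : Type} (F : multifun V) (U W : V -> Prop) : Prop :=
  independent F U /\ independent F W /\ disjoint_union U W.

(** When V = U ⊔ W and F is strict, U and W are both independent exactly
    when F_- swaps them: F_-(U) = W and F_-(W) = U.  Iterating the swap gives
    the parity pattern of F^n_-(U) and F^n_-(W); conversely the case n = 0
    of that pattern already is the swap. *)
From Stdlib Require Import Lia.

Section Bipartite.

Context {V : Type} (F : multifun V).

Lemma set_eq_trans (A B C : V -> Prop) :
  set_eq A B -> set_eq B C -> set_eq A C.
Proof. intros HAB HBC x. specialize (HAB x); specialize (HBC x); tauto. Qed.

Lemma Fminus_ext (A B : V -> Prop) :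
  set_eq A B -> set_eq (Fminus F A) (Fminus F B).
Proof.
  intros HAB x; split; intros [y [Fxy Hy]]; exists y; split; auto; apply HAB; auto.
Qed.

Lemma disjoint_union_sym (U W : V -> Prop) :
  disjoint_union U W -> disjoint_union W U.
Proof. intros [Hcover Hdisj]; split; intros x; firstorder. Qed.

Lemma Fminus_eq_of_independent (U W : V -> Prop) :
  strict F -> disjoint_union U W -> independent F U -> independent F W ->
  set_eq (Fminus F U) W.
Proof.
  intros Hstrict [Hcover Hdisj] IU IW x; split.
  - intros FUx. destruct (Hcover x) as [Ux | Wx]; auto.
    exfalso; apply (IU x); auto.
  - intros Wx. destruct (Hstrict x) as [y Fxy]. exists y; split; auto.
    destruct (Hcover y) as [Uy | Wy]; auto.
    exfalso; apply (IW x); split; auto. exists y; auto.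
Qed.

Lemma independent_of_Fminus_eq (U W : V -> Prop) :
  disjoint_union U W -> set_eq (Fminus F U) W -> independent F U.
Proof.
  intros [_ Hdisj] HUW x [Ux FUx]. apply (Hdisj x); split; auto. apply HUW; auto.
Qed.

Lemma Fminus_iter_alternate (A B : V -> Prop) :
  set_eq (Fminus F A) B -> set_eq (Fminus F B) A ->
  forall n, set_eq (Fminus_iter F (2 * n) A) A /\
            set_eq (Fminus_iter F (2 * n + 1) A) B.
Proof.
  intros HAB HBA n.
  assert (Heven : set_eq (Fminus_iter F (2 * n) A) A).
  { induction n as [| n IH]; [intro x; reflexivity |].
    replace (2 * S n) with (S (S (2 * n))) by lia.
    exact (set_eq_trans _ _ _
             (Fminus_ext _ _ (set_eq_trans _ _ _ (Fminus_ext _ _ IH) HAB)) HBA). }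
  split; [exact Heven |].
  replace (2 * n + 1) with (S (2 * n)) by lia.
  exact (set_eq_trans _ _ _ (Fminus_ext _ _ Heven) HAB).
Qed.

End Bipartite.

Theorem lemma4p12 (V : Type) (F : multifun V) (U W : V -> Prop) :
  (exists v : V, True) ->
  strict F -> undirected F ->
  nonempty U -> nonempty W ->
  (bipartite F U W <->
   (disjoint_union U W /\
    forall n : nat,
      set_eq (Fminus_iter F (2 * n) U) U /\
      set_eq (Fminus_iter F (2 * n) W) W /\
      set_eq (Fminus_iter F (2 * n + 1) U) W /\
      set_eq (Fminus_iter F (2 * n + 1) W) U)).
Proof.
  intros _ Hstrict _ _ _; split.
  - intros [IU [IW HUW]].
    pose proof (Fminus_eq_of_independent F U W Hstrict HUW IU IW) as HU.
    pose proof (Fminus_eq_of_independent F W U Hstrict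
                  (disjoint_union_sym U W HUW) IW IU) as HW.
    split; [exact HUW |]. intros n.
    destruct (Fminus_iter_alternate F U W HU HW n).
    destruct (Fminus_iter_alternate F W U HW HU n).
    tauto.
  - intros [HUW Hiter]. destruct (Hiter 0) as [_ [_ [HU HW]]].
    split; [exact (independent_of_Fminus_eq F U W HUW HU) |].
    split; [exact (independent_of_Fminus_eq F W U (disjoint_union_sym U W HUW) HW) |].
    exact HUW.
Qed.
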